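(* Let $0\le s<n$, $A\in M_{s+1,n-s}$, and $A'=BA$ for some $B\in\mathrm{GL}_{s+1}(\mathbb Q)$. Then $\omega_j(A')=\omega_j(A)$ for all $j=1,\dots,n-s$.
   Context: Higher order exponents: let $V=\mathbb R^{n+1}$ with basis $e_0,\dots,e_n$, $V_0=\mathrm{span}(e_1,\dots,e_n)$, $V_\bullet=\mathrm{span}(e_{s+1},\dots,e_n)$; $e_I=e_{i_1}\wedge\dots\wedge e_{i_j}$; $\bigwedge(V)$ carries the inner product making $\{e_I\}$ orthonormal. $\mathcal S_{n+1,j}$ is the set of $w=v_1\wedge\dots\wedge v_j$ with $v_1,\dots,v_j\in\mathbb Z^{n+1}$ linearly independent; $\pi_\bullet$ is the orthogonal projection $\bigwedge^jV\to\bigwedge^jV_\bullet$. For a matrix $A\in M_{s+1,n-s}$ with rows indexed $0,\dots,s$ and columns $s+1,\dots,n$, let $a_i=\sum_{k=s+1}^na_{i,k}e_k$ and let $R_Ac(w)\in(\bigwedge^{j-1}V_0)^{s+1}$ have $i$-th component $\sum_{J\subset\{1,\dots,n\},\#J=j-1}\langle(e_i+a_i)\wedge e_J,w\rangle e_J$ (Euclidean norm). For $1\le j\le n-s$, $\omega_j(A)$ is the supremum of $v$ such that there exist $w\in\mathcal S_{n+1,j}$ with arbitrarily large $\|\pi_\bullet(w)\|$ satisfying $\|R_Ac(w)\|<\|\pi_\bullet(w)\|^{-\frac{v+1-j}{j}}$. *)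

From HB Require Import structures.
From mathcomp Require Import all_boot all_order all_algebra.
From mathcomp Require Import all_classical all_reals.
From mathcomp Require Import ereal exp.
Set Implicit Arguments. Unset Strict Implicit. Unset Printing Implicit Defensive.
Import Order.TTheory GRing.Theory Num.Theory.
Local Open Scope ring_scope.
Local Open Scope classical_set_scope.

Section Omega.
Variable R : realType.

(* V = R^{n+1}, coordinates indexed by 'I_n.+1 (e_0,...,e_n).
   A j-vector v_1 /\ ... /\ v_j (rows of M) has coefficient on
   e_I = e_{i_1} /\ ... /\ e_{i_j} (i_1 < ... < i_j) equal to the j x j
   minor of M on the columns I (enum I is increasing). *)
Definition wcoord (j m : nat) (M : 'M[R]_(j, m.+1)) (I : {set 'I_m.+1}) : R :=
  \det (\matrix_(k < j, l < j) M k (nth ord0 (enum I) l)).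

(* inner product on /\^j V making {e_I} orthonormal *)
Definition wdot (j m : nat) (M N : 'M[R]_(j, m.+1)) : R :=
  \sum_(I : {set 'I_m.+1} | #|I| == j) wcoord M I * wcoord N I.

(* || pi_bullet(w) ||, V_bullet = span(e_{s+1},...,e_n) *)
Definition proj_norm (s j n : nat) (M : 'M[R]_(j, n.+1)) : R :=
  Num.sqrt (\sum_(I : {set 'I_n.+1} | (#|I| == j) && [forall k in I, (s < k)%N])
              wcoord M I ^+ 2).

(* e_i + a_i, a_i = sum_{k=s+1}^n a_{i,k} e_k; column c of A is index s+1+c *)
Definition eia (s n : nat) (A : 'M[R]_(s.+1, n - s)) (i : 'I_s.+1) : 'rV[R]_n.+1 :=
  \row_k (((i : nat) == k)%:R + \sum_(c < n - s | (s.+1 + c == k)%N) A i c).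

(* the j vectors u, e_{J_1}, ..., e_{J_{j-1}} (J increasing) whose wedge is u /\ e_J *)
Definition wedge_eJ (j n : nat) (u : 'rV[R]_n.+1) (J : {set 'I_n.+1}) : 'M[R]_(j, n.+1) :=
  \matrix_(k < j, l < n.+1)
     (if (k : nat) == 0%N then u 0 l else ((nth ord0 (enum J) k.-1 == l)%:R)).

Definition Rc_norm (s n j : nat) (A : 'M[R]_(s.+1, n - s)) (M : 'M[R]_(j, n.+1)) : R :=
  Num.sqrt (\sum_(i < s.+1)
     \sum_(J : {set 'I_n.+1} | (#|J| == j.-1) && (ord0 \notin J))
        (wdot (wedge_eJ j (eia A i) J) M) ^+ 2).

(* v is admissible: there are w = v_1 /\ ... /\ v_j in S_{n+1,j} (rows of an
   integer matrix of rank j) with arbitrarily large ||pi_bullet(w)|| and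
   ||R_A c(w)|| < ||pi_bullet(w)||^{-(v+1-j)/j}. *)
Definition omega_admissible (s n j : nat) (A : 'M[R]_(s.+1, n - s)) (v : R) : Prop :=
  forall X : R, exists M : 'M[int]_(j, n.+1),
    let Mr := map_mx (fun z : int => z%:~R) M : 'M[R]_(j, n.+1) in
    row_free Mr /\ X < proj_norm s Mr /\
    Rc_norm A Mr < powR (proj_norm s Mr) (- ((v + 1 - j%:R) / j%:R)).

Definition omega (s n j : nat) (A : 'M[R]_(s.+1, n - s)) : \bar R :=
  ereal_sup [set v%:E | v in @omega_admissible s n j A].

End Omega.

From HB Require Import structures.
From mathcomp Require Import all_boot all_order all_algebra.
From mathcomp Require Import all_classical all_reals.
From mathcomp Require Import ereal exp.
From mathcomp Require Import fingroup perm zify.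
Import Order.TTheory GRing.Theory Num.Theory.
Set Implicit Arguments. Unset Strict Implicit. Unset Printing Implicit Defensive.
Local Open Scope ring_scope.

(* Let B' be the image of B in M_(s+1)(R) and q > 0 an integer with q B'
   integral.  The integral matrix T = diag(q B', q I_(n-s)) is invertible,
   multiplies V_bullet by q, and sends the row e_i + a_i of B' A to
   q sum_m B'_(i,m) (e_m + a_m).  So w |-> w T^T preserves S_(n+1,j) and
   multiplies ||pi_bullet(w)|| by q^j.  Moreover ||R_(B'A) c(w T^T)|| is at
   most a constant times ||R_A c(w)||: by Cauchy-Binet, each coordinate
   <u /\ e_J, w T^T> is <u' /\ z, w> with u' in the span of the e_m + a_m;
   after reducing z modulo u' and expanding it in the basis e_J, J of
   {1,...,n}, this is a fixed combination of the coordinates of R_A c(w).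
   These constant factors are absorbed by an arbitrarily small loss in the
   exponent, so omega_j(A) <= omega_j(B' A); apply this to B^-1 for the
   converse. *)

Section WedgeCoordinates.
Variable R : realType.

Definition enum_at (m k : nat) (I : {set 'I_m.+1}) (l : 'I_k) : 'I_m.+1 :=
  nth ord0 (enum I) l.

Section EnumAt.
Variables (m k : nat) (I : {set 'I_m.+1}).
Hypothesis cardI : #|I| = k.

Lemma enum_at_inj : injective (@enum_at m k I).
Proof.
move=> a b /eqP; rewrite /enum_at nth_uniq ?enum_uniq // -?cardE ?cardI //.
by move/eqP/val_inj.
Qed.

Lemma enum_at_mem (l : 'I_k) : enum_at I l \in I.
Proof. by rewrite /enum_at -mem_enum mem_nth // -cardE cardI. Qed.

Lemma enum_atP x : x \in I -> exists l : 'I_k, enum_at I l = x.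
Proof.
move=> xI; have ix : (index x (enum I) < k)%N.
  by rewrite -cardI cardE index_mem mem_enum.
by exists (Ordinal ix); rewrite /enum_at nth_index ?mem_enum.
Qed.

Lemma imset_enum_at : [set enum_at I l | l : 'I_k] = I.
Proof.
apply/setP => x; apply/imsetP/idP => [[l _ ->]|/enum_atP [l <-]].
  exact: enum_at_mem.
by exists l.
Qed.

Lemma inj_ffun_imageP (f : {ffun 'I_k -> 'I_m.+1}) :
  reflect (exists p : 'S_k, f = [ffun r => enum_at I (p r)])
          (injectiveb f && ([set f r | r : 'I_k] == I)).
Proof.
apply: (iffP andP) => [[/injectiveP f_inj /eqP fI]|[p ->]].
  have f_in r : f r \in I by rewrite -fI imset_f.
  pose p0 r : 'I_k := insubd r (index (f r) (enum I)).
  have p0E r : enum_at I (p0 r) = f r.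
    rewrite /p0 /enum_at insubdK ?nth_index ?mem_enum ?f_in //.
    have : (index (f r) (enum I) < #|I|)%N by rewrite cardE index_mem mem_enum.
    by rewrite cardI.
  have p0_inj : injective p0 by move=> a b Eab; apply: f_inj; rewrite -!p0E Eab.
  by exists (perm p0_inj); apply/ffunP => r; rewrite ffunE permE p0E.
split.
  by apply/injectiveP => a b; rewrite !ffunE => /enum_at_inj /perm_inj.
rewrite -[X in _ == X]imset_enum_at; apply/eqP/setP => x.
apply/imsetP/imsetP => [[r _ ->]|[l _ ->]]; first by exists (p r); rewrite ?ffunE.
by exists (p^-1 l)%g; rewrite ?ffunE ?permKV.
Qed.

End EnumAt.

Lemma det_mulmx_trE k m (N M : 'M[R]_(k, m)) :
  \det (N *m M^T) = \sum_(f : {ffun 'I_k -> 'I_m})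
    (\prod_r N r (f r)) * \det (\matrix_(r, r') M r' (f r)).
Proof.
have rowE (p : 'S_k) : \prod_r (N *m M^T) r (p r) =
    \sum_(f : {ffun 'I_k -> 'I_m}) \prod_r (N r (f r) * M (p r) (f r)).
  rewrite -(bigA_distr_bigA (fun r l => N r l * M (p r) l)) /=.
  by apply: eq_bigr => r _; rewrite mxE; apply: eq_bigr => l _; rewrite mxE.
rewrite /determinant; under eq_bigr => p _ do rewrite rowE big_distrr /=.
rewrite exchange_big /=; apply: eq_bigr => f _; rewrite big_distrr /=.
apply: eq_bigr => p _; rewrite big_split /= mulrCA; congr (_ * (_ * _)).
by apply: eq_bigr => r _; rewrite mxE.
Qed.

Lemma cauchy_binet k m (N M : 'M[R]_(k, m.+1)) : \det (N *m M^T) = wdot N M.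
Proof.
pose G (f : {ffun 'I_k -> 'I_m.+1}) :=
  (\prod_r N r (f r)) * \det (\matrix_(r, r') M r' (f r)).
have G_inj : \sum_f G f = \sum_(f : {ffun 'I_k -> 'I_m.+1} | injectiveb f) G f.
  rewrite [LHS](bigID (fun f : {ffun 'I_k -> 'I_m.+1} => injectiveb f)) /=.
  rewrite [X in _ + X]big1 ?addr0 //.
  move=> f /injectivePn [r1 [r2 r12 fr12]].
  by rewrite /G (determinant_alternate r12) ?mulr0 // => r'; rewrite !mxE fr12.
rewrite det_mulmx_trE -/(G _) G_inj /wdot.
rewrite (partition_big (fun f : {ffun 'I_k -> 'I_m.+1} => [set f r | r : 'I_k])
  (fun I => #|I| == k)) /=; last first.
  by move=> f /injectiveP f_inj; rewrite card_imset // card_ord.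
apply: eq_bigr => I /eqP cardI.
pose h (p : 'S_k) : {ffun 'I_k -> 'I_m.+1} := [ffun r => enum_at I (p r)].
have h_inj : {in [set: 'S_k] &, injective h}.
  move=> p1 p2 _ _ /ffunP h12; apply/permP => r.
  by move: (h12 r); rewrite !ffunE => /(enum_at_inj cardI).
rewrite (eq_bigl [in h @: [set: 'S_k]]); last first.
  by move=> f; apply/(inj_ffun_imageP cardI)/imsetP => [[p ->]|[p _ ->]];
    exists p.
rewrite big_imset //= /wcoord -/(enum_at I _) mulrC [X in _ * X]/determinant.
rewrite big_distrr /=; apply: eq_big => [p|p _]; first by rewrite finset.in_setT.
have detE : \det (\matrix_(r, r') M r' (h p r)) =
    (-1) ^+ p * \det (\matrix_(r, l) M r (enum_at I l)).
  rewrite -[\det (\matrix_(r, l) M r _)]det_tr -det_perm -det_mulmx -row_permE.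
  by congr (\det _); apply/matrixP => r r'; rewrite !mxE ffunE.
rewrite /G detE mulrCA [RHS]mulrCA [_ * \det _]mulrC; congr (_ * (_ * _)).
by apply: eq_bigr => r _; rewrite ffunE mxE.
Qed.

End WedgeCoordinates.

Section FirstRowExpansion.
Variable R : realType.

Definition eJ_mx (k n : nat) (J : {set 'I_n.+1}) : 'M[R]_(k, n.+1) :=
  \matrix_(r, l) (enum_at J r == l)%:R.

Lemma wedge_eJ_col_mx k n (u : 'rV[R]_n.+1) J :
  wedge_eJ k.+1 u J = col_mx u (eJ_mx k J).
Proof.
apply/matrixP => r l; rewrite !mxE; case: splitP => [r' ->|r' ->].
  by rewrite (ord1 r') eqxx.
by rewrite mxE.
Qed.

Lemma det_col0 p (M : 'M[R]_p) j0 : (forall i, M i j0 = 0) -> \det M = 0.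
Proof.
by move=> M0; rewrite (expand_det_col _ j0) big1 // => i _; rewrite M0 mul0r.
Qed.

Lemma wcoord_col0 k n (Z : 'M[R]_(k, n.+1)) (I : {set 'I_n.+1}) x :
  #|I| = k -> x \in I -> (forall r, Z r x = 0) -> wcoord Z I = 0.
Proof.
move=> cardI /(enum_atP cardI) [l xE] Z0.
by apply: (det_col0 (j0 := l)) => r; rewrite mxE -/(enum_at I l) xE Z0.
Qed.

Lemma wcoord_eJ_mx k n (J I : {set 'I_n.+1}) : #|J| = k -> #|I| = k ->
  wcoord (eJ_mx k J) I = (J == I)%:R.
Proof.
move=> cardJ cardI; have [<-|neqJI] := eqVneq J I.
  rewrite /wcoord -(det1 _ k); congr (\det _); apply/matrixP => r l.
  by rewrite !mxE -/(enum_at J l) (inj_eq (enum_at_inj cardJ)).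
have [x xI xJ] : exists2 x, x \in I & x \notin J.
  apply/exists_inP; rewrite -negb_forall_in; apply: contra neqJI.
  move=> /forall_inP IJ; rewrite eq_sym eqEcard cardJ cardI leqnn andbT.
  by apply/fintype.subsetP => y /IJ.
apply: (wcoord_col0 cardI xI) => r; rewrite mxE.
by case: eqP (enum_at_mem cardJ r) => // ->; rewrite (negPf xJ).
Qed.

Lemma row'0_col_mx_col' k m (a : 'rV[R]_m) (W : 'M[R]_(k, m)) (c : 'I_m) :
  row' (ord0 : 'I_(1 + k)) (col' c (col_mx a W)) = col' c W.
Proof.
apply/matrixP => i j; rewrite !mxE; case: splitP => [i' /= iE|i' /= iE].
  by move: (ltn_ord i'); rewrite -iE /bump leq0n.
suff -> : i' = i by [].
by apply: val_inj; move: iE; rewrite /bump leq0n add1n => -[].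
Qed.

Lemma col'_mulmx k m p (Z : 'M[R]_(k, m)) (N : 'M[R]_(m, p)) c :
  col' c (Z *m N) = Z *m col' c N.
Proof. by apply/matrixP => i j; rewrite !mxE; apply: eq_bigr => t _; rewrite mxE. Qed.

Section FixedRows.
Variables (k m : nat) (Z : 'M[R]_(k, m)) (N : 'M[R]_(m, k.+1)).

(* The cofactors do not depend on [y]: the determinant is linear in [y]. *)
Lemma det_col_mx_mulmxE (y : 'rV[R]_m) :
  \det (col_mx y Z *m N) =
  \sum_c (y *m N) 0 c * cofactor (col_mx (0 : 'rV[R]_k.+1) (Z *m N)) 0 c.
Proof.
rewrite mul_col_mx (expand_det_row _ ord0); apply: eq_bigr => c _.
rewrite /cofactor !row'0_col_mx_col'; congr (_ * _).
by rewrite mxE; case: splitP => // j' _; rewrite (ord1 j').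
Qed.

Lemma det_col_mx_mulmxD (a b : 'rV[R]_m) :
  \det (col_mx (a + b) Z *m N) = \det (col_mx a Z *m N) + \det (col_mx b Z *m N).
Proof.
rewrite !det_col_mx_mulmxE -big_split /=; apply: eq_bigr => c _.
by rewrite mulmxDl mxE mulrDl.
Qed.

Lemma det_col_mx_mulmx_sum p (lam : 'I_p -> R) (y : 'I_p -> 'rV[R]_m) :
  \det (col_mx (\sum_i lam i *: y i) Z *m N) =
  \sum_i lam i * \det (col_mx (y i) Z *m N).
Proof.
rewrite det_col_mx_mulmxE.
under [RHS]eq_bigr => i _ do rewrite det_col_mx_mulmxE big_distrr /=.
rewrite exchange_big /=; apply: eq_bigr => c _.
rewrite mulmx_suml summxE big_distrl /=; apply: eq_bigr => i _.
by rewrite -scalemxAl mxE mulrA.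
Qed.

Lemma det_col_mx_mulmx_sub (u : 'rV[R]_m) (c : 'cV[R]_k) :
  \det (col_mx u (Z - c *m u) *m N) = \det (col_mx u Z *m N).
Proof.
have -> : col_mx u (Z - c *m u) = block_mx 1 0 (- c) 1 *m col_mx u Z.
  by rewrite mul_block_col !mul1mx mul0mx addr0 mulNmx addrC.
by rewrite -mulmxA det_mulmx det_lblock !det1 !mul1r.
Qed.

End FixedRows.

(* By Cauchy-Binet, each cofactor above is a linear form in the coordinates of [Z]. *)
Lemma det_col_mx_mulmx_wcoord k n (u : 'rV[R]_n.+1) (N : 'M[R]_(n.+1, k.+1)) :
  exists H : {set 'I_n.+1} -> R, forall Z : 'M[R]_(k, n.+1),
    \det (col_mx u Z *m N) = \sum_(I : {set 'I_n.+1} | #|I| == k) wcoord Z I * H I.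
Proof.
exists (fun I => \sum_c (u *m N) 0 c * ((-1) ^+ (0 + c) * wcoord (col' c N)^T I)).
move=> Z; rewrite det_col_mx_mulmxE.
under eq_bigr => c _ do rewrite /cofactor row'0_col_mx_col' col'_mulmx
  -[col' c N]trmxK cauchy_binet /wdot !big_distrr /=.
rewrite exchange_big /=; apply: eq_bigr => I _.
rewrite big_distrr /=; apply: eq_bigr => c _.
by rewrite [RHS]mulrCA (mulrCA (wcoord Z I)).
Qed.

Lemma det_col_mx_mulmx_eJ k n (u : 'rV[R]_n.+1) (N : 'M[R]_(n.+1, k.+1))
    (Z : 'M[R]_(k, n.+1)) :
  (forall r, Z r ord0 = 0) ->
  \det (col_mx u Z *m N) =
  \sum_(I : {set 'I_n.+1} | (#|I| == k) && (ord0 \notin I))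
     wcoord Z I * \det (col_mx u (eJ_mx k I) *m N).
Proof.
move=> Z0; have [H HE] := det_col_mx_mulmx_wcoord u N.
have H_eJ (I : {set 'I_n.+1}) : #|I| = k -> \det (col_mx u (eJ_mx k I) *m N) = H I.
  move=> cardI; rewrite HE (bigD1 I) ?cardI //= big1 ?addr0.
    by rewrite wcoord_eJ_mx // eqxx mul1r.
  move=> I' /andP [/eqP cardI' neqI']; rewrite wcoord_eJ_mx //.
  by rewrite eq_sym (negPf neqI') mul0r.
rewrite HE (bigID (fun I : {set 'I_n.+1} => ord0 \in I)) /= big1 ?add0r.
  by apply: eq_bigr => I /andP [/eqP cardI _]; rewrite H_eJ.
by move=> I /andP [/eqP cardI I0]; rewrite (wcoord_col0 cardI I0 Z0) mul0r.
Qed.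

End FirstRowExpansion.
Arguments eJ_mx {R} k {n} J.

Lemma exists_sum_le (R : realType) (I : finType) (P : pred I) (T : Type)
    (f : I -> T -> R) (g : T -> R) :
  (forall i, exists K, forall t, f i t <= K * g t) ->
  exists K, forall t, \sum_(i | P i) f i t <= K * g t.
Proof.
move=> /choice [K K_ge]; exists (\sum_(i | P i) K i) => t.
by rewrite mulr_suml; apply: ler_sum => i _.
Qed.

Section RcBounds.
Variable R : realType.
Variables (s n : nat) (A : 'M[R]_(s.+1, n - s)).

Local Notation x := (eia A).

Lemma eia0 (i : 'I_s.+1) : x i 0 ord0 = ((i : nat) == 0%N)%:R.
Proof. by rewrite mxE big_pred0 ?addr0 // => c; rewrite addSn. Qed.

Lemma Rc_norm_ge0 j (M : 'M[R]_(j, n.+1)) : 0 <= Rc_norm A M.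
Proof. exact: sqrtr_ge0. Qed.

Lemma det_eia_eJ_le k (M : 'M[R]_(k.+1, n.+1)) (i : 'I_s.+1) (J : {set 'I_n.+1}) :
  #|J| = k -> ord0 \notin J ->
  `|\det (col_mx (x i) (eJ_mx k J) *m M^T)| <= Rc_norm A M.
Proof.
move=> cardJ J0; rewrite /Rc_norm -sqrtr_sqr; apply: ler_wsqrtr.
rewrite (bigD1 i) //= (bigD1 J) /=; last by rewrite cardJ eqxx J0.
rewrite -cauchy_binet wedge_eJ_col_mx -addrA lerDl.
by apply: addr_ge0; do ![apply: sumr_ge0 => ? _]; apply: sqr_ge0.
Qed.

Section FirstRowNormalized.
Variables (k : nat) (u : 'rV[R]_n.+1) (Z : 'M[R]_(k, n.+1)).
Hypothesis u0 : u 0 ord0 = 1.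

Definition reduced_weight : R :=
  \sum_(I : {set 'I_n.+1} | (#|I| == k) && (ord0 \notin I))
     `|wcoord (Z - col ord0 Z *m u) I|.

(* Since [u] has first coordinate 1, [Z - col ord0 Z *m u] has a zero first
   column, so only the [e_J] with [0 \notin J] are needed to expand it. *)
Lemma det_col_mx_le (N : 'M[R]_(n.+1, k.+1)) beta :
  (forall I : {set 'I_n.+1}, #|I| = k -> ord0 \notin I ->
     `|\det (col_mx u (eJ_mx k I) *m N)| <= beta) ->
  `|\det (col_mx u Z *m N)| <= reduced_weight * beta.
Proof.
move=> beta_ge; have col0 r : (Z - col ord0 Z *m u) r ord0 = 0.
  by rewrite !mxE big_ord1 !mxE u0 mulr1 subrr.
rewrite -(det_col_mx_mulmx_sub _ _ _ (col ord0 Z)) (det_col_mx_mulmx_eJ _ _ col0).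
rewrite mulr_suml; apply: le_trans (ler_norm_sum _ _ _) _.
by apply: ler_sum => I /andP [/eqP cardI I0]; rewrite normrM ler_wpM2l ?beta_ge.
Qed.

End FirstRowNormalized.

(* [x 0] has first coordinate 1; for [i != 0] we use [x i = (x 0 + x i) - x 0]. *)
Lemma det_eia_le k (i : 'I_s.+1) (Z : 'M[R]_(k, n.+1)) (M : 'M[R]_(k.+1, n.+1)) :
  `|\det (col_mx (x i) Z *m M^T)| <=
    (reduced_weight (x ord0) Z + reduced_weight (x ord0 + x i) Z *+ 2) * Rc_norm A M.
Proof.
have x00 : x ord0 0 ord0 = 1 by rewrite eia0.
have w_ge0 u : 0 <= reduced_weight u Z by apply: sumr_ge0.
have le0 : `|\det (col_mx (x ord0) Z *m M^T)| <= reduced_weight (x ord0) Z * Rc_norm A M.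
  by apply: det_col_mx_le => // I cardI I0; apply: det_eia_eJ_le.
have [->|i0] := eqVneq i ord0.
  by apply: le_trans le0 _; rewrite ler_wpM2r ?Rc_norm_ge0 // lerDl mulrn_wge0.
have xi0 : (x ord0 + x i) 0 ord0 = 1.
  by rewrite mxE x00 eia0 -[0%N]/(val (@ord0 s)) (inj_eq val_inj) (negPf i0) addr0.
have lei : `|\det (col_mx (x ord0 + x i) Z *m M^T)| <=
    reduced_weight (x ord0 + x i) Z * (Rc_norm A M *+ 2).
  apply: det_col_mx_le => // I cardI I0; rewrite det_col_mx_mulmxD mulr2n.
  by apply: le_trans (ler_normD _ _) _; rewrite lerD ?det_eia_eJ_le.
have -> : \det (col_mx (x i) Z *m M^T) =
    \det (col_mx (x ord0 + x i) Z *m M^T) - \det (col_mx (x ord0) Z *m M^T).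
  by rewrite det_col_mx_mulmxD addrAC subrr add0r.
apply: le_trans (ler_normB _ _) _.
by rewrite mulrDl addrC lerD // mulrnAl -mulrnAr.
Qed.

Lemma det_span_eia_le k (lam : 'I_s.+1 -> R) (Z : 'M[R]_(k, n.+1)) :
  exists K, forall M : 'M[R]_(k.+1, n.+1),
    `|\det (col_mx (\sum_i lam i *: x i) Z *m M^T)| <= K * Rc_norm A M.
Proof.
exists (\sum_i `|lam i| *
  (reduced_weight (x ord0) Z + reduced_weight (x ord0 + x i) Z *+ 2)) => M.
rewrite det_col_mx_mulmx_sum mulr_suml; apply: le_trans (ler_norm_sum _ _ _) _.
by apply: ler_sum => i _; rewrite normrM -mulrA ler_wpM2l ?det_eia_le.
Qed.

Lemma Rc_norm_mulmx_le (A' : 'M[R]_(s.+1, n - s)) k (T : 'M[R]_n.+1)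
    (lam : 'I_s.+1 -> 'I_s.+1 -> R) :
  (forall i, eia A' i *m T = \sum_m lam i m *: x m) ->
  exists2 C, 0 < C & forall M : 'M[R]_(k.+1, n.+1),
    Rc_norm A' (M *m T^T) <= C * Rc_norm A M.
Proof.
move=> eiaT.
have term_le i J : exists K, forall M : 'M[R]_(k.+1, n.+1),
    wdot (wedge_eJ k.+1 (eia A' i) J) (M *m T^T) ^+ 2 <= K * Rc_norm A M ^+ 2.
  have [K K_ge] := det_span_eia_le (lam i) (eJ_mx k J *m T).
  exists (K ^+ 2) => M; rewrite -cauchy_binet trmx_mul trmxK mulmxA.
  rewrite wedge_eJ_col_mx (mul_col_mx (eia A' i) (eJ_mx k J) T) eiaT -exprMn.
  by rewrite -real_normK ?num_real // !expr2 ler_pM ?normr_ge0.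
have [K K_ge] : exists K, forall M : 'M[R]_(k.+1, n.+1),
    \sum_(i < s.+1) \sum_(J : {set 'I_n.+1} | (#|J| == k) && (ord0 \notin J))
       wdot (wedge_eJ k.+1 (eia A' i) J) (M *m T^T) ^+ 2 <= K * Rc_norm A M ^+ 2.
  by do 2![apply: exists_sum_le => ?].
exists (Num.sqrt `|K| + 1) => [|M]; first by rewrite ltr_pwDr ?sqrtr_ge0.
apply: le_trans (_ : Num.sqrt `|K| * Rc_norm A M <= _); last first.
  by rewrite ler_wpM2r ?Rc_norm_ge0 ?lerDl.
rewrite -[Rc_norm A M](ger0_norm (Rc_norm_ge0 M)).
rewrite -[`|Rc_norm A M|]sqrtr_sqr -sqrtrM ?normr_ge0 //.
rewrite {1}/Rc_norm; apply: ler_wsqrtr; apply: le_trans (K_ge M) _.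
by rewrite ler_wpM2r ?sqr_ge0 ?ler_norm.
Qed.

End RcBounds.

Lemma sum_delta (R : nzSemiRingType) p (i : 'I_p) (F : 'I_p -> R) :
  \sum_(m < p) ((i : nat) == m)%:R * F m = F i.
Proof.
rewrite (bigD1 i) //= eqxx mul1r big1 ?addr0 // => m mi.
by rewrite (_ : (i : nat) == m = false) ?mul0r //; apply/negbTE; rewrite eq_sym.
Qed.

Section DiagExt.
Variables (R : comUnitRingType) (s n : nat).
Hypothesis le_sn : (s <= n)%N.

Definition diag_ext (C : 'M[R]_(s.+1)) (d : R) : 'M[R]_(n.+1) :=
  \matrix_(k, l) if ((k <= s) && (l <= s))%N then C (inord k) (inord l)
                 else (k == l)%:R * d.

Lemma inordK_widen (m : 'I_s.+1) : (inord m : 'I_n.+1) = m :> nat.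
Proof. by rewrite inordK // (leq_trans (ltn_ord m)). Qed.

Lemma diag_ext_row (v : 'rV[R]_n.+1) C d (l : 'I_n.+1) :
  (v *m diag_ext C d) 0 l =
    if (l <= s)%N then \sum_(m < s.+1) v 0 (inord m) * C m (inord l) else v 0 l * d.
Proof.
rewrite mxE; case: ifP => ls.
  pose F t := v 0 (inord t) * C (inord t) (inord l).
  rewrite (eq_bigr (fun m : 'I_s.+1 => F m)); last by move=> m _; rewrite /F inord_val.
  rewrite (big_ord_widen n.+1 F) // [RHS]big_mkcond /=.
  apply: eq_bigr => t _; rewrite /F inord_val mxE ls andbT ltnS.
  case: ifP => // /negbT ts; rewrite (_ : t == l = false) ?mul0r ?mulr0 //.
  by apply: contraNF ts => /eqP ->.
rewrite (bigD1 l) //= big1 ?addr0; first by rewrite mxE ls andbF eqxx mul1r.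
by move=> t tl; rewrite mxE ls andbF (negPf tl) mul0r mulr0.
Qed.

Lemma diag_ext_mul C D d e : diag_ext C d *m diag_ext D e = diag_ext (C *m D) (d * e).
Proof.
apply/matrixP => k l.
have -> : (diag_ext C d *m diag_ext D e) k l = (row k (diag_ext C d) *m diag_ext D e) 0 l.
  by rewrite -row_mul [RHS]mxE.
rewrite diag_ext_row [RHS]mxE.
case: ifP => ls; rewrite ?andbT ?andbF; last by rewrite !mxE ls andbF mulrA.
case: ifP => ks.
  rewrite mxE; apply: eq_bigr => m _.
  by rewrite !mxE ks inordK_widen -ltnS ltn_ord inord_val.
rewrite big1 ?mul0r; last first.
  move=> m _; rewrite !mxE ks /= (_ : (k == inord m) = false) ?mul0r //.
  by apply: contraFF ks => /eqP ->; rewrite inordK_widen -ltnS.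
by rewrite (_ : (k == l) = false) ?mul0r //; apply: contraFF ks => /eqP ->.
Qed.

Lemma diag_ext1 : diag_ext 1 1 = 1%:M.
Proof.
apply/matrixP => k l; rewrite !mxE; case: ifP => [/andP [ks ls]|_]; last by rewrite mulr1.
by congr (_%:R); rewrite -(inj_eq val_inj) /= !inordK ?ltnS.
Qed.

Lemma diag_ext_unitmx C d :
  C \in unitmx -> d \is a GRing.unit -> diag_ext C d \in unitmx.
Proof.
move=> C_unit d_unit.
have := diag_ext_mul C (invmx C) d d^-1.
by rewrite mulmxV // mulrV // diag_ext1 => /mulmx1_unit [].
Qed.

End DiagExt.
Arguments diag_ext {R s} n C d.

Lemma map_diag_ext (aR rR : comUnitRingType) (f : {rmorphism aR -> rR}) s n
    (C : 'M[aR]_s.+1) d :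
  map_mx f (diag_ext n C d) = diag_ext n (map_mx f C) (f d).
Proof.
apply/matrixP => k l; rewrite !mxE; case: ifP => _ //.
by rewrite rmorphM rmorph_nat.
Qed.

Lemma rat_mx_scale_int p (B : 'M[rat]_p) :
  exists2 q : int, 0 < q & exists D : 'M[int]_p, map_mx intr D = q%:~R *: B.
Proof.
exists (\prod_(ij : 'I_p * 'I_p) denq (B ij.1 ij.2)).
  by apply: prodr_gt0 => ij _; apply: denq_gt0.
exists (\matrix_(i, j) (numq (B i j) *
  \prod_(ij : 'I_p * 'I_p | ij != (i, j)) denq (B ij.1 ij.2))).
apply/matrixP => i j; rewrite !mxE [in RHS](bigD1 (i, j)) //= !rmorphM /=.
by rewrite numqE [RHS]mulrC mulrA.
Qed.

Section DiagExtTransfer.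
Variables (R : realType) (s n : nat).
Hypothesis le_sn : (s <= n)%N.

Lemma eia_low (A : 'M[R]_(s.+1, n - s)) i (l : 'I_n.+1) : (l <= s)%N ->
  eia A i 0 l = ((i : nat) == l)%:R.
Proof.
move=> ls; rewrite mxE big_pred0 ?addr0 // => c.
by apply/negbTE/eqP => lE; move: ls; rewrite -lE; lia.
Qed.

Lemma eia_high (A : 'M[R]_(s.+1, n - s)) i (l : 'I_n.+1) : (s < l)%N ->
  eia A i 0 l = \sum_(c < n - s | (s.+1 + c == l)%N) A i c.
Proof.
move=> ls; rewrite mxE (_ : (i : nat) == l = false) ?add0r //.
by apply/negbTE/eqP => iE; move: (ltn_ord i); rewrite iE; lia.
Qed.

Lemma eia_mul_diag_ext (A : 'M[R]_(s.+1, n - s)) (C : 'M[R]_(s.+1)) q i :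
  eia (C *m A) i *m diag_ext n (q *: C) q = \sum_m (q * C i m) *: eia A m.
Proof.
apply/rowP => l; rewrite (diag_ext_row le_sn) summxE; case: ifP => ls.
  have low (m : 'I_s.+1) : eia (C *m A) i 0 (inord m) = ((i : nat) == m)%:R.
    by rewrite eia_low (inordK_widen le_sn) // -ltnS.
  have lE : (inord l : 'I_s.+1) = l :> nat by rewrite inordK.
  under eq_bigr => m _ do rewrite low.
  under [RHS]eq_bigr => m _ do rewrite mxE eia_low // -lE eq_sym mulrC.
  by rewrite !sum_delta mxE.
rewrite eia_high ?ltnNge ?ls //.
under [RHS]eq_bigr => m _ do rewrite mxE eia_high ?ltnNge ?ls // big_distrr /=.
rewrite [RHS]exchange_big big_distrl /=; apply: eq_bigr => c _.
rewrite mxE big_distrl /=; apply: eq_bigr => m _.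
by rewrite mulrAC [C i m * q]mulrC.
Qed.

Lemma wcoord_mul_diag_ext k (M : 'M[R]_(k, n.+1)) (C : 'M_s.+1) q (I : {set 'I_n.+1}) :
  #|I| = k -> {in I, forall x : 'I_n.+1, s < x}%N ->
  wcoord (M *m (diag_ext n C q)^T) I = q ^+ k * wcoord M I.
Proof.
move=> cardI I_gt; rewrite /wcoord -detZ; congr (\det _).
apply/matrixP => r l; rewrite !mxE -/(enum_at I l).
have /negPf sF : ~~ (enum_at I l <= s)%N by rewrite -ltnNge I_gt ?enum_at_mem.
rewrite (bigD1 (enum_at I l)) //= big1 ?addr0.
  by rewrite !mxE sF /= eqxx mul1r mulrC.
by move=> t /negPf tF; rewrite !mxE sF /= eq_sym tF mul0r mulr0.
Qed.

Lemma proj_norm_mul_diag_ext k (M : 'M[R]_(k, n.+1)) (C : 'M_s.+1) q : 0 <= q ->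
  proj_norm s (M *m (diag_ext n C q)^T) = q ^+ k * proj_norm s M.
Proof.
move=> q_ge0; rewrite /proj_norm -[q ^+ k](ger0_norm (exprn_ge0 k q_ge0)).
rewrite -sqrtr_sqr -sqrtrM ?sqr_ge0 // big_distrr /=; congr Num.sqrt.
apply: eq_bigr => I /andP [/eqP cardI /forall_inP I_gt].
by rewrite (wcoord_mul_diag_ext _ _ _ cardI I_gt) exprMn.
Qed.

End DiagExtTransfer.

Lemma powR_scale_dominates (R : realType) (c C e e' : R) :
  0 < c -> 0 < C -> e' < e ->
  exists T, forall p, T < p -> C * powR p (- e) <= powR (c * p) (- e').
Proof.
move=> c_gt0 C_gt0 lt_e'e; set d := e - e'.
have d_gt0 : 0 < d by rewrite subr_gt0.
exists (powR (C * powR c e') d^-1) => p T_lt_p.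
have p_gt0 : 0 < p by apply: le_lt_trans T_lt_p; apply: powR_ge0.
have C_le : C * powR c e' <= powR p d.
  have Cc_ge0 : 0 <= C * powR c e' by rewrite mulr_ge0 ?powR_ge0 ?(ltW C_gt0).
  rewrite -[C * _]powRr1 // -(mulVf (lt0r_neq0 d_gt0)) powRrM.
  by apply: ge0_ler_powR;
    rewrite ?nnegrE ?powR_ge0 ?(ltW d_gt0) ?(ltW p_gt0) ?(ltW T_lt_p).
have -> : powR (c * p) (- e') = (powR c e')^-1 * (powR p d * powR p (- e)).
  rewrite powRM ?ltW // powRN -powRD ?(gt_eqF p_gt0) ?implybT //.
  by rewrite /d addrAC subrr add0r -powRN.
rewrite mulrA ler_wpM2r ?powR_ge0 // ler_pdivlMl ?powR_gt0 //.
by rewrite mulrC.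
Qed.

Lemma ereal_sup_le_approx (R : realType) (S1 S2 : set R) :
  (forall v, S1 v -> forall v', v' < v -> S2 v') ->
  (ereal_sup [set v%:E | v in S1] <= ereal_sup [set v%:E | v in S2])%E.
Proof.
move=> S12; apply: ge_ereal_sup => _ [v S1v <-].
apply/lee_subgt0Pr => e e_gt0; apply: ereal_sup_ubound; exists (v - e) => //.
by apply: (S12 v) => //; rewrite ltrBlDr ltrDl.
Qed.

Section OmegaTransfer.
Variables (R : realType) (s n : nat).
Hypothesis le_sn : (s <= n)%N.

Local Notation intr_mx M := (map_mx (fun z : int => (z%:~R : R)) M).
Local Notation ratr_mx B := (map_mx (fun q : rat => (ratr q : R)) B).

Lemma integral_transfer (A : 'M[R]_(s.+1, n - s)) (B : 'M[rat]_s.+1) k :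
  B \in unitmx ->
  exists (P : 'M[int]_n.+1) (c C : R), [/\ 0 < c, 0 < C, intr_mx P \in unitmx,
    forall M : 'M[R]_(k.+1, n.+1), proj_norm s (M *m intr_mx P) = c * proj_norm s M &
    forall M : 'M[R]_(k.+1, n.+1),
      Rc_norm (ratr_mx B *m A) (M *m intr_mx P) <= C * Rc_norm A M].
Proof.
move=> B_unit; have [qz qz_gt0 [D /matrixP DE]] := rat_mx_scale_int B.
set q : R := qz%:~R; have q_gt0 : 0 < q by rewrite ltr0z.
set B' := ratr_mx B.
have PE : intr_mx (diag_ext n D qz)^T = (diag_ext n (q *: B') q)^T.
  rewrite -map_trmx (map_diag_ext intr); congr (diag_ext _ _ _)^T.
  apply/matrixP => i j; have := DE i j; rewrite !mxE => DEij.
  by rewrite -[LHS]ratr_int DEij rmorphM /= ratr_int.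
have [C C_gt0 C_le] := Rc_norm_mulmx_le k (eia_mul_diag_ext le_sn A B' q).
exists (diag_ext n D qz)^T, (q ^+ k.+1), C; split => //.
- exact: exprn_gt0.
- rewrite PE unitmx_tr diag_ext_unitmx ?unitfE ?lt0r_neq0 //.
  by rewrite unitmxZ ?unitfE ?lt0r_neq0 // map_unitmx.
- by move=> M; rewrite PE proj_norm_mul_diag_ext ?ltW.
- by move=> M; rewrite PE.
Qed.

Lemma omega_admissible_transfer (A A' : 'M[R]_(s.+1, n - s)) k (P : 'M[int]_n.+1)
    (c C v v' : R) :
  0 < c -> 0 < C -> intr_mx P \in unitmx ->
  (forall M : 'M[R]_(k.+1, n.+1), proj_norm s (M *m intr_mx P) = c * proj_norm s M) ->
  (forall M : 'M[R]_(k.+1, n.+1), Rc_norm A' (M *m intr_mx P) <= C * Rc_norm A M) ->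
  v' < v -> omega_admissible k.+1 A v -> omega_admissible k.+1 A' v'.
Proof.
move=> c_gt0 C_gt0 P_unit projP RcP lt_v'v admA X.
set e := (v + 1 - k.+1%:R) / k.+1%:R; set e' := (v' + 1 - k.+1%:R) / k.+1%:R.
have lt_e'e : e' < e by rewrite ltr_pM2r ?invr_gt0 ?ltr0n // !ltrD2r.
have [T T_le] := powR_scale_dominates c_gt0 C_gt0 lt_e'e.
have [M /= [M_free [XTM M_small]]] := admA (Num.max (X / c) T).
move: XTM; rewrite gt_max => /andP [XM TM].
exists (M *m P); rewrite /= (map_mxM intr) projP; split; last split.
- by rewrite /row_free mxrankMfree // row_free_unit.
- by rewrite mulrC -ltr_pdivrMr.
- apply: le_lt_trans (RcP _) _; apply: lt_le_trans (T_le _ TM).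
  by rewrite ltr_pM2l.
Qed.

Lemma omega_le_mulmx (A : 'M[R]_(s.+1, n - s)) (B : 'M[rat]_s.+1) j :
  (0 < j)%N -> B \in unitmx -> (omega j A <= omega j (ratr_mx B *m A))%E.
Proof.
case: j => // k _ B_unit; have [P [c [C [c_gt0 C_gt0 P_unit projP RcP]]]] :=
  integral_transfer A k B_unit.
apply: ereal_sup_le_approx => v admA v' lt_v'v.
exact: omega_admissible_transfer c_gt0 C_gt0 P_unit projP RcP lt_v'v admA.
Qed.

End OmegaTransfer.

Theorem lemma5p6 (R : realType) (n s : nat) (A : 'M[R]_(s.+1, n - s))
    (B : 'M[rat]_(s.+1)) :
  (s < n)%N -> B \in unitmx ->
  forall j : nat, (1 <= j <= n - s)%N ->
    omega j (map_mx (fun q : rat => ratr q) B *m A) = omega j A.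
Proof.
move=> lt_sn B_unit j /andP [j_gt0 _]; have le_sn := ltnW lt_sn.
have Binv_unit : invmx B \in unitmx by rewrite unitmx_inv.
apply/le_anti/andP; split; last exact: omega_le_mulmx.
have := omega_le_mulmx le_sn (map_mx (fun q : rat => ratr q) B *m A) j_gt0 Binv_unit.
by rewrite mulmxA -map_mxM mulVmx // map_mx1 mul1mx.
Qed.
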